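(* Let $Y$ be a finite connected simple undirected graph with a cycle-edge $e=\{v,w\}$, let $O\in\mathsf{Acyc}(Y)$, and let $\mathbf{c}=c_1c_2\cdots c_m$ be a click-sequence for $O$ that contains every vertex of $\mathcal{I}(O)$ at least once and has $c_1=v$. Then every vertex of $\mathcal{I}(O)$ appears in $\mathbf{c}$ before any vertex of $\mathcal{I}(O)$ appears for the second time.
   Context: $\mathsf{Acyc}(Y)$ is the set of acyclic orientations; $i\leq_O j$ iff there is a directed path from $i$ to $j$ in $O$. $\mathcal{I}(O)=\{a: v\leq_O a\leq_O w\}$ if $v\leq_O w$, and $\mathcal{I}(O)=\varnothing$ otherwise. A click at a vertex $x$ which is a source reverses all edges incident to $x$. A click-sequence for $O$ is a sequence of vertices $c_1,\dots,c_m$ such that for each $i$, $c_i$ is a source of the orientation obtained from $O$ by successively clicking $c_1,\dots,c_{i-1}$; $\mathbf{c}(O)$ denotes the resulting orientation after all $m$ clicks. *)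

From mathcomp Require Import all_boot.
Set Implicit Arguments. Unset Strict Implicit. Unset Printing Implicit Defensive.

Definition simple_graph (T : finType) (adj : rel T) : Prop :=
  irreflexive adj /\ symmetric adj.

Definition connected_graph (T : finType) (adj : rel T) : Prop :=
  forall x y : T, connect adj x y.

(* {v,w} is a cycle-edge: it lies on some cycle of Y, i.e. there is a
   duplicate-free cyclic sequence p (length >= 3) of vertices, consecutive
   vertices adjacent, in which w follows v. *)
Definition cycle_edge (T : finType) (adj : rel T) (v w : T) : Prop :=
  adj v w /\
  exists p : seq T, [/\ 2 < size p, uniq p, cycle adj p, v \in p & next p v = w].

(* An orientation of Y: o x y means the edge {x,y} is directed x -> y.
   Every edge gets exactly one direction, and only edges are directed. *)
Definition orientation (T : finType) (adj : rel T) (o : rel T) : Prop :=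
  (forall x y, o x y -> adj x y) /\ (forall x y, adj x y -> o x y (+) o y x).

Definition leO (T : finType) (o : rel T) (i j : T) : bool := connect o i j.

Definition acyclic_orientation (T : finType) (adj : rel T) (o : rel T) : Prop :=
  orientation adj o /\ (forall x y, o x y -> ~~ connect o y x).

Definition interval (T : finType) (o : rel T) (v w : T) : {set T} :=
  if leO o v w then [set a | leO o v a && leO o a w] else set0.

Definition is_source (T : finType) (o : rel T) (x : T) : bool :=
  [forall y, ~~ o y x].

Definition click (T : finType) (o : rel T) (x : T) : rel T :=
  fun y z => if (y == x) || (z == x) then o z y else o y z.

Fixpoint is_click_seq (T : finType) (o : rel T) (c : seq T) : bool :=
  if c is x :: cs then is_source o x && is_click_seq (click o x) cs else true.

From mathcomp Require Import all_boot zify.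
Set Implicit Arguments. Unset Strict Implicit. Unset Printing Implicit Defensive.

(* Along a click-sequence, each click at an endpoint of an edge x -> y reverses
   it, and the head of an edge is never a source, so x and y are clicked
   alternately, starting with x.  Hence #x - #y is 0 or 1 (counting clicks so
   far) and the edge points x -> y exactly when it is 0; in particular #
   decreases weakly along directed paths of O.  If the vertex b of I(O) is
   clicked for the second time, b is a source of the current orientation, so
   its in-neighbour x on a path v ->* x -> b has #x = #b + 1 >= 2; then
   #v >= 2 and #w >= #v - 1 >= 1 (for b = v one gets #w = #v >= 1 directly).
   Every a in I(O) lies above w, so #a >= #w >= 1. *)

Section Clicks.
Variable T : finType.
Implicit Types (o : rel T) (s : seq T) (x y z : T).

Definition clicks o s : rel T := foldl (@click T) o s.

Lemma is_click_seq_cat o s1 s2 :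
  is_click_seq o (s1 ++ s2) = is_click_seq o s1 && is_click_seq (clicks o s1) s2.
Proof. by elim: s1 o => [|z s1 IH] o //=; rewrite IH andbA. Qed.

Lemma clicks_edge s o x y : x != y -> o x y -> ~~ o y x -> is_click_seq o s ->
  [/\ count_mem y s <= count_mem x s <= (count_mem y s).+1,
      clicks o s x y = (count_mem x s == count_mem y s) &
      clicks o s y x = (count_mem x s != count_mem y s)].
Proof.
elim: s o x y => [|z s IH] o x y nxy oxy noyx /=.
  by rewrite leqnSn oxy (negbTE noyx).
case/andP=> src_z cs.
have [zx|nzx] := eqVneq z x.
  subst z; have nyx : y != x by rewrite eq_sym.
  have oyx' : click o x y x by rewrite /click eqxx orbT.
  have noxy' : ~~ click o x x y by rewrite /click eqxx /= (negbTE noyx).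
  have [/andP [le1 le2] -> ->] := IH _ _ _ nyx oyx' noxy' cs.
  rewrite (negbTE nxy) add1n add0n; set m := count_mem x s.
  have Sm_neq : (m.+1 == m) = false by lia.
  have [->|->] : count_mem y s = m \/ count_mem y s = m.+1 by lia.
    by rewrite eqxx Sm_neq leqnSn leqnn.
  by rewrite eqxx Sm_neq ltnSn leqnSn.
have [zy|nzy] := eqVneq z y.
  by subst z; move/forallP: src_z => /(_ x); rewrite oxy.
have not_z u : u \in [:: x; y] -> (u == z) = false.
  by rewrite !inE => /orP [] /eqP ->; rewrite eq_sym ?(negbTE nzx) ?(negbTE nzy).
have oxy' : click o z x y by rewrite /click !not_z ?inE ?eqxx ?orbT.
have noyx' : ~~ click o z y x by rewrite /click !not_z ?inE ?eqxx ?orbT.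
by rewrite !add0n; exact: IH.
Qed.

Lemma count_mem_edge_source_tail s o x y :
  x != y -> o x y -> ~~ o y x -> is_click_seq o s -> is_source (clicks o s) x ->
  count_mem x s = count_mem y s.
Proof.
move=> nxy oxy noyx cs /forallP /(_ y).
by have [_ _ ->] := clicks_edge nxy oxy noyx cs; rewrite negbK => /eqP.
Qed.

Lemma count_mem_edge_source_head s o x y :
  x != y -> o x y -> ~~ o y x -> is_click_seq o s -> is_source (clicks o s) y ->
  count_mem x s = (count_mem y s).+1.
Proof.
move=> nxy oxy noyx cs /forallP /(_ x).
by have [/andP [le1 le2] -> _] := clicks_edge nxy oxy noyx cs; lia.
Qed.

Lemma connect_last_edge o x y : connect o x y -> x != y ->
  exists2 z, connect o x z & o z y.
Proof.
case/connectP=> p; case/lastP: p => [|p z] /=; first by move=> _ ->; rewrite eqxx.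
rewrite rcons_path last_rcons => /andP [xp oz] -> _.
by exists (last x p) => //; apply/connectP; exists p.
Qed.

Section Acyclic.
Variable o : rel T.
Hypothesis o_acyclic : forall x y, o x y -> ~~ connect o y x.

Lemma acyclic_edge x y : o x y -> x != y /\ ~~ o y x.
Proof.
move=> oxy; have no_yx := o_acyclic oxy; split.
  by apply: contraNneq no_yx => ->; exact: connect0.
by apply: contra no_yx => oyx; exact: connect1.
Qed.

Lemma count_mem_connect s x y : is_click_seq o s -> connect o x y ->
  count_mem y s <= count_mem x s.
Proof.
move=> cs /connectP [p xp ->]; elim: p x xp => [|z p IH] x //= /andP [oxz zp].
have [nxz nozx] := acyclic_edge oxz.
have [/andP [le_zx _] _ _] := clicks_edge nxz oxz nozx cs.
exact: leq_trans (IH _ zp) le_zx.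
Qed.

Lemma count_mem_head_pos s v w b :
  o v w -> is_click_seq o s -> b \in s -> is_source (clicks o s) b ->
  connect o v b -> 0 < count_mem w s.
Proof.
move=> ovw cs bs src_b vb; have [nvw nowv] := acyclic_edge ovw.
have b_pos : 0 < count_mem b s by rewrite -has_count has_pred1.
have [/andP [le_wv le_vw] _ _] := clicks_edge nvw ovw nowv cs.
have [vb_eq|nvb] := eqVneq v b.
  by subst b; rewrite -(count_mem_edge_source_tail nvw ovw nowv cs src_b).
have [x vx oxb] := connect_last_edge vb nvb; have [nxb noxb] := acyclic_edge oxb.
have := count_mem_edge_source_head nxb oxb noxb cs src_b.
have := count_mem_connect cs vx; lia.
Qed.

End Acyclic.
End Clicks.

Lemma acyclic_edge_orient (T : finType) (adj o : rel T) (v w : T) :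
  acyclic_orientation adj o -> adj v w -> connect o v w -> o v w.
Proof.
case=> [[_ xor_o] acyc] avw; have := xor_o _ _ avw.
case: (o v w) => //= owv; have := acyc _ _ owv; by move/negP.
Qed.

Theorem proposition7 (T : finType) (adj : rel T) (v w : T) (o : rel T)
    (c : seq T) :
  simple_graph adj -> connected_graph adj -> cycle_edge adj v w ->
  acyclic_orientation adj o ->
  is_click_seq o c ->
  {subset interval o v w <= c} ->
  head w c = v -> c != [::] ->
  forall j : nat, j < size c ->
    nth v c j \in interval o v w -> nth v c j \in take j c ->
    forall a, a \in interval o v w -> a \in take j c.
Proof.
move=> _ _ [avw _] ac cs_c _ _ _ j lt_j_c; set b := nth v c j; set s := take j c.
rewrite /interval /leO; case: ifP => [vw|_]; last by rewrite inE.
rewrite inE => /andP [vb _] bs a; rewrite inE => /andP [_ aw].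
have ovw := acyclic_edge_orient ac avw vw; have o_acyclic := ac.2.
have: is_click_seq o (s ++ b :: drop j.+1 c).
  by rewrite /s /b -drop_nth // cat_take_drop.
rewrite is_click_seq_cat /= => /and3P [cs src_b _].
have w_pos := count_mem_head_pos o_acyclic ovw cs bs src_b vb.
by rewrite -has_pred1 has_count (leq_trans w_pos) // (count_mem_connect o_acyclic cs aw).
Qed.
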